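(* Let $\mathbf P=\mathbf u\mathbf v^{\mathsf T}\in\mathbb R^{\mathsf M\times\mathsf N}$ with $\mathbf u\in\mathbb R^{\mathsf M}$, $\mathbf v\in\mathbb R^{\mathsf N}$, and let $j_{\max}\in\arg\max_{j}\mathbf v_j$, $j_{\min}\in\arg\min_j\mathbf v_j$. Let $x,y\in[\mathsf M]$ be users with $\mathbf u_x\ge0$ and $\mathbf u_y<0$. Let $\Delta>0$, let $S_x,S_y\subseteq[\mathsf N]$ with $j_{\max}\in S_x$ and $j_{\min}\in S_y$, and let $\widetilde{\mathbf P}\in\mathbb R^{\mathsf M\times\mathsf N}$ satisfy $|\widetilde{\mathbf P}_{xj}-\mathbf P_{xj}|\le\Delta/2$ for all $j\in S_x$ and $|\widetilde{\mathbf P}_{yj}-\mathbf P_{yj}|\le\Delta/2$ for all $j\in S_y$. Define $T_x=\{j\in S_x:\widetilde{\mathbf P}_{xj}+\Delta>\max_{t\in S_x}\widetilde{\mathbf P}_{xt}\}$ and $T_y=\{j\in S_y:\widetilde{\mathbf P}_{yj}+\Delta>\max_{t\in S_y}\widetilde{\mathbf P}_{yt}\}$. If $T_x\cap T_y\neq\emptyset$, then $\max_{t\in[\mathsf N]}\mathbf P_{xt}-\min_{t\in[\mathsf N]}\mathbf P_{xt}\le4\Delta$ or $\max_{t\in[\mathsf N]}\mathbf P_{yt}-\min_{t\in[\mathsf N]}\mathbf P_{yt}\le4\Delta$. *)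

From mathcomp Require Import all_boot all_order all_algebra.
Set Implicit Arguments. Unset Strict Implicit. Unset Printing Implicit Defensive.
Import Order.TTheory GRing.Theory Num.Theory.
Local Open Scope ring_scope.

(* Maximum / minimum of f over a finite set S, seeded with f s0, where s0 is
   an element of S (so the seed does not affect the value). *)
Definition setmax (R : realDomainType) (I : finType) (S : {set I}) (f : I -> R) (s0 : I) : R :=
  \big[Num.max/f s0]_(t in S) f t.
Definition setmin (R : realDomainType) (I : finType) (S : {set I}) (f : I -> R) (s0 : I) : R :=
  \big[Num.min/f s0]_(t in S) f t.

Definition rank1 (R : realDomainType) (M N : nat) (u : 'I_M -> R) (v : 'I_N -> R) : 'M[R]_(M, N) :=
  \matrix_(i < M, j < N) (u i * v j).

Definition Tset (R : realDomainType) (M N : nat) (Pt : 'M[R]_(M, N)) (i : 'I_M)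
  (S : {set 'I_N}) (s0 : 'I_N) (Delta : R) : {set 'I_N} :=
  [set j in S | setmax S (fun t => Pt i t) s0 < Pt i j + Delta].

(* Fix j in both T-sets.  Since jmax lies in S_x, the estimation errors give
   u_x (v_jmax - v_j) < 2 Delta, and likewise (-u_y) (v_j - v_jmin) < 2 Delta.
   Both row ranges are |u_i| (v_jmax - v_jmin), and the smaller of |u_x|, |u_y|
   times v_jmax - v_jmin = (v_jmax - v_j) + (v_j - v_jmin) is below 4 Delta. *)
From mathcomp Require Import all_boot all_order all_algebra.
From mathcomp Require Import lra.
Set Implicit Arguments. Unset Strict Implicit. Unset Printing Implicit Defensive.
Import Order.TTheory GRing.Theory Num.Theory.
Local Open Scope ring_scope.

Section SetExtrema.
Variables (R : realDomainType) (I : finType) (S : {set I}) (f : I -> R) (s0 : I).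

Lemma setmax_le B : f s0 <= B -> (forall t, t \in S -> f t <= B) -> setmax S f s0 <= B.
Proof. by move=> h0 h; rewrite /setmax; elim/big_rec: _ => // i a /h; rewrite ge_max => ->. Qed.

Lemma setmin_ge B : B <= f s0 -> (forall t, t \in S -> B <= f t) -> B <= setmin S f s0.
Proof. by move=> h0 h; rewrite /setmin; elim/big_rec: _ => // i a /h; rewrite le_min => ->. Qed.

Lemma le_setmax j : j \in S -> f j <= setmax S f s0.
Proof. by move=> jS; rewrite /setmax (bigD1 j) //= le_max lexx. Qed.

End SetExtrema.

Lemma rank1E (R : realDomainType) (M N : nat) (u : 'I_M -> R) (v : 'I_N -> R) i j :
  rank1 u v i j = u i * v j.
Proof. by rewrite mxE. Qed.

Lemma rank1_row_range (R : realDomainType) (M N : nat) (u : 'I_M -> R) (v : 'I_N -> R)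
    (jmax jmin : 'I_N) (i : 'I_M) (s0 : 'I_N) :
    (forall j, v j <= v jmax) -> (forall j, v jmin <= v j) ->
  setmax [set: 'I_N] (rank1 u v i) s0 - setmin [set: 'I_N] (rank1 u v i) s0
    <= `|u i| * (v jmax - v jmin).
Proof.
move=> hmax hmin; have [ui_ge0 | ui_lt0] := leP 0 (u i).
- have hi : setmax [set: 'I_N] (rank1 u v i) s0 <= u i * v jmax.
    by apply: setmax_le => [|t _]; rewrite rank1E ler_wpM2l.
  have lo : u i * v jmin <= setmin [set: 'I_N] (rank1 u v i) s0.
    by apply: setmin_ge => [|t _]; rewrite rank1E ler_wpM2l.
  by rewrite ger0_norm // mulrBr; apply: lerB.
- have hi : setmax [set: 'I_N] (rank1 u v i) s0 <= u i * v jmin.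
    by apply: setmax_le => [|t _]; rewrite rank1E ler_wnM2l // ltW.
  have lo : u i * v jmax <= setmin [set: 'I_N] (rank1 u v i) s0.
    by apply: setmin_ge => [|t _]; rewrite rank1E ler_wnM2l // ltW.
  by rewrite ltr0_norm // mulNr mulrBr opprB; apply: lerB.
Qed.

(* Every index of the T-set is within 2 Delta of every entry of the true row
   on S: the estimates are Delta/2-accurate and within Delta of each other. *)
Lemma Tset_near_row_max (R : realFieldType) (M N : nat) (P Pt : 'M[R]_(M, N))
    (i : 'I_M) (S : {set 'I_N}) (s0 j k : 'I_N) (Delta : R) :
    (forall t, t \in S -> `|Pt i t - P i t| <= Delta / 2) ->
    j \in Tset Pt i S s0 Delta -> k \in S ->
  P i k - P i j < 2 * Delta.
Proof.
move=> close; rewrite inE => /andP[jS hT] kS.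
have := le_setmax (fun t => Pt i t) s0 kS.
have := close _ jS; have := close _ kS.
rewrite !ler_norml => /andP[k1 k2] /andP[j1 j2]; lra.
Qed.

Lemma min_weight_le (R : realFieldType) (a b p q c : R) :
    0 <= a -> 0 <= b -> 0 <= p -> 0 <= q -> a * p <= c -> b * q <= c ->
  a * (p + q) <= 2 * c \/ b * (p + q) <= 2 * c.
Proof.
move=> a0 b0 p0 q0 hp hq; rewrite !mulrDr.
have [ab | ba] := leP a b.
- by left; have := ler_wpM2r q0 ab; lra.
- by right; have := ler_wpM2r p0 (ltW ba); lra.
Qed.

Theorem mainTheorem7 (R : realFieldType) (M N : nat)
  (u : 'I_M -> R) (v : 'I_N -> R) (jmax jmin : 'I_N)
  (Hjmax : forall j, v j <= v jmax) (Hjmin : forall j, v jmin <= v j)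
  (x y : 'I_M) (Hux : 0 <= u x) (Huy : u y < 0)
  (Delta : R) (HDelta : 0 < Delta)
  (Sx Sy : {set 'I_N}) (HSx : jmax \in Sx) (HSy : jmin \in Sy)
  (Pt : 'M[R]_(M, N))
  (Hx : forall j, j \in Sx -> `|Pt x j - rank1 u v x j| <= Delta / 2)
  (Hy : forall j, j \in Sy -> `|Pt y j - rank1 u v y j| <= Delta / 2) :
  Tset Pt x Sx jmax Delta :&: Tset Pt y Sy jmin Delta != set0 ->
  setmax [set: 'I_N] (fun t => rank1 u v x t) jmax
    - setmin [set: 'I_N] (fun t => rank1 u v x t) jmax <= 4 * Delta
  \/ setmax [set: 'I_N] (fun t => rank1 u v y t) jmax
    - setmin [set: 'I_N] (fun t => rank1 u v y t) jmax <= 4 * Delta.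
Proof.
case/set0Pn => j; rewrite inE => /andP[jTx jTy].
have gap_x : `|u x| * (v jmax - v j) <= 2 * Delta.
  have := Tset_near_row_max Hx jTx HSx.
  by rewrite !rank1E ger0_norm // mulrBr => /ltW.
have gap_y : `|u y| * (v j - v jmin) <= 2 * Delta.
  have := Tset_near_row_max Hy jTy HSy.
  by rewrite !rank1E ltr0_norm // mulNr mulrBr opprB => /ltW.
have pos_gaps : (0 <= v jmax - v j) /\ (0 <= v j - v jmin).
  by rewrite !subr_ge0 Hjmax Hjmin.
have split_range : v jmax - v jmin = (v jmax - v j) + (v j - v jmin).
  by rewrite addrA subrK.
have := min_weight_le (normr_ge0 (u x)) (normr_ge0 (u y))
  pos_gaps.1 pos_gaps.2 gap_x gap_y.
rewrite -split_range (_ : 2 * (2 * Delta) = 4 * Delta); last by lra.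
by case=> h; [left | right]; apply: le_trans (rank1_row_range _ _ _ Hjmax Hjmin) h.
Qed.
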